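(* Let $k$ be a field, $G$ a group, $n\ge1$, $V=k^n$, and $\omega=(\alpha,\beta)\in D^1(M_n(k)[G])$. Define $\tau^\omega\colon V^G\to V^G$ by $\tau^\omega(x)(g)=\sum_{h\in G}\alpha(h)x(gh)+\sum_{h\in G}\beta(g)(h)x(gh)$ for $x\in V^G$, $g\in G$. Then $\tau^\omega\in\mathrm{LNUCA}_c(G,k^n)$.
   Context: For a ring $R$ (here $R=M_n(k)$), $R[G]$ is the group ring and $(R[G])[G]$ is the set of finitely supported maps $\beta\colon G\to R[G]$, with $\beta(g)(h)\in R$. $D^1(R[G])$ is the set $R[G]\times(R[G])[G]$ (with a ring structure not needed here). For $g\in G$ and $x\in V^G$, $(gx)(h)=x(g^{-1}h)$. For finite $M\subset G$ and $s\in\mathcal{L}(V^M,V)^G$, $\sigma_s(x)(g)=s(g)((g^{-1}x)\vert_M)$. $\mathrm{LNUCA}_c(G,V)$ is the set of maps $\sigma_s$ with $M$ finite and $s$ constant outside some finite subset of $G$. *)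

From HB Require Import structures.
From mathcomp Require Import all_boot all_order all_algebra finmap.
From mathcomp Require Import boolp classical_sets functions cardinality fsbigop.
Set Implicit Arguments.
Unset Strict Implicit.
Unset Printing Implicit Defensive.
Import GRing.Theory.
Local Open Scope classical_set_scope.
Local Open Scope ring_scope.

Definition fin_supp (G : choiceType) (T : Type) (z : T) (f : G -> T) : Prop :=
  finite_set [set g | f g <> z].

Definition in_group_ring (k : fieldType) (n : nat) (G : groupType)
  (a : G -> 'M[k]_n) : Prop := fin_supp 0 a.

Definition in_group_ring2 (k : fieldType) (n : nat) (G : groupType)
  (b : G -> G -> 'M[k]_n) : Prop :=
  (forall g, in_group_ring (b g)) /\ fin_supp (fun _ : G => 0 : 'M[k]_n) b.

(* (alpha, beta) is an element of D^1(M_n(k)[G]) = R[G] x (R[G])[G]. *)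
Definition in_D1 (k : fieldType) (n : nat) (G : groupType)
  (alpha : G -> 'M[k]_n) (beta : G -> G -> 'M[k]_n) : Prop :=
  in_group_ring alpha /\ in_group_ring2 beta.

(* V = k^n, represented as column vectors 'cV[k]_n. V^G = G -> 'cV[k]_n. *)

Definition tau_omega (k : fieldType) (n : nat) (G : groupType)
  (alpha : G -> 'M[k]_n) (beta : G -> G -> 'M[k]_n)
  (x : G -> 'cV[k]_n) : G -> 'cV[k]_n :=
  fun g => \sum_(h \in [set: G]) (alpha h *m x (g * h)%g)
         + \sum_(h \in [set: G]) (beta g h *m x (g * h)%g).

Definition lshift (G : groupType) (V : Type) (g : G) (x : G -> V) : G -> V :=
  fun h => x (g^-1 * h)%g.

Definition sigma_s (k : fieldType) (n : nat) (G : groupType) (M : {fset G})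
  (s : G -> {ffun M -> 'cV[k]_n} -> 'cV[k]_n)
  (x : G -> 'cV[k]_n) : G -> 'cV[k]_n :=
  fun g => s g [ffun m : M => lshift (g^-1)%g x (val m)].

Definition LNUCA_c (k : fieldType) (n : nat) (G : groupType)
  (tau : (G -> 'cV[k]_n) -> (G -> 'cV[k]_n)) : Prop :=
  exists (M : {fset G}) (s : G -> {ffun M -> 'cV[k]_n} -> 'cV[k]_n),
    (forall g, linear (s g)) /\
    (exists (F : set G) (c : {ffun M -> 'cV[k]_n} -> 'cV[k]_n),
        finite_set F /\ forall g, ~ F g -> s g = c) /\
    tau = sigma_s s.

From Pilot Require Import Defs.
From HB Require Import structures.
From mathcomp Require Import all_boot all_order all_algebra finmap.
From mathcomp Require Import boolp classical_sets functions cardinality fsbigop.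

(* All the coefficients alpha(h) and beta(g)(h) vanish for h outside one finite
   set M: the union of the support of alpha with the supports of the finitely
   many nonzero rows beta(g).  Hence tau^omega(x)(g) only reads x on gM, i.e. it
   is sigma_s for the rule s(g)(y) = sum_(m in M) (alpha(m) + beta(g)(m)) y(m).
   This rule is linear, and for g outside the finite support of beta it is the
   fixed rule y |-> sum_(m in M) alpha(m) y(m). *)

Import GRing.Theory.
Local Open Scope classical_set_scope.
Local Open Scope ring_scope.

Section ConvolutionRule.

Context {k : fieldType} {n : nat} {G : groupType}.

Lemma fsbig_mulmx_fset {M : {fset G}} {c : G -> 'M[k]_n} (v : G -> 'cV[k]_n) :
  (forall h, h \notin M -> c h = 0) ->
  \sum_(h \in [set: G]) c h *m v h = \sum_(m : M) c (val m) *m v (val m).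
Proof.
by move=> c0; rewrite (fsbigTE M) ?big_seq_fsetE // => h /c0 ->; rewrite mul0mx.
Qed.

Definition conv_rule (M : {fset G}) (c : G -> G -> 'M[k]_n)
    (g : G) (y : {ffun M -> 'cV[k]_n}) : 'cV[k]_n :=
  \sum_(m : M) c g (val m) *m y m.

Lemma conv_rule_linear M c g : linear (conv_rule M c g).
Proof.
move=> a u v; rewrite /conv_rule scaler_sumr -big_split /=.
by apply: eq_bigr => m _; rewrite !ffunE mulmxDr scalemxAr.
Qed.

Lemma sigma_s_conv_rule M c (x : G -> 'cV[k]_n) g :
  (forall h, h \notin M -> c g h = 0) ->
  sigma_s (conv_rule M c) x g = \sum_(h \in [set: G]) c g h *m x (g * h)%g.
Proof.
move=> c0; rewrite (fsbig_mulmx_fset _ c0) /sigma_s /conv_rule.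
by apply: eq_bigr => m _; rewrite ffunE /Defs.lshift invgK.
Qed.

Lemma tau_omega_conv_rule (M : {fset G}) alpha beta :
  (forall h, h \notin M -> alpha h = 0 /\ forall g, beta g h = 0) ->
  tau_omega alpha beta = sigma_s (conv_rule M (fun g h => alpha h + beta g h)).
Proof.
move=> coef0; apply/funext => x; apply/funext => g.
have alpha0 h : h \notin M -> alpha h = 0 by case/coef0.
have beta0 h : h \notin M -> beta g h = 0 by case/coef0.
have sum0 h : h \notin M -> alpha h + beta g h = 0.
  by move=> Mh; rewrite alpha0 // beta0 // addr0.
rewrite sigma_s_conv_rule // /tau_omega (fsbig_mulmx_fset _ alpha0).
rewrite (fsbig_mulmx_fset _ beta0) (fsbig_mulmx_fset _ sum0) -big_split.
by apply: eq_bigr => m _; rewrite mulmxDl.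
Qed.

Lemma in_D1_coef_support {alpha : G -> 'M[k]_n} {beta : G -> G -> 'M[k]_n} :
  in_D1 alpha beta ->
  exists M : {fset G}, forall h, h \notin M -> alpha h = 0 /\ forall g, beta g h = 0.
Proof.
move=> [fin_alpha [fin_rows fin_beta]].
pose S := [set h | alpha h <> 0]
  `|` \bigcup_(g in [set g | beta g <> fun=> 0]) [set h | beta g h <> 0].
have finS : finite_set S.
  by rewrite finite_setU; split=> //; apply: bigcup_finite => // g _; apply: fin_rows.
exists (fset_set S) => h; rewrite in_fset_set // notin_setE => Sh.
split=> [|g]; apply: contrapT => nz; apply: Sh; first by left.
by right; exists g => //= beta_g0; apply: nz; rewrite beta_g0.
Qed.

End ConvolutionRule.

Theorem lemma6p1 (k : fieldType) (G : groupType) (n : nat) (hn : (0 < n)%N)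
  (alpha : G -> 'M[k]_n) (beta : G -> G -> 'M[k]_n) :
  in_D1 alpha beta ->
  LNUCA_c (tau_omega alpha beta).
Proof.
move=> omegaD1; have [M coef0] := in_D1_coef_support omegaD1.
exists M, (conv_rule M (fun g h => alpha h + beta g h)); split; [|split].
- exact: conv_rule_linear.
- case: omegaD1 => _ [_ fin_beta].
  exists [set g | beta g <> fun=> 0], (conv_rule M (fun _ => alpha) 1%g).
  split=> // g beta_g; have beta_g0 : beta g = fun=> 0 by apply: contrapT.
  by apply/funext => y; apply: eq_bigr => m _; rewrite beta_g0 addr0.
- exact: tau_omega_conv_rule.
Qed.
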